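(* Let $\mathbf{P_0},\mathbf{P_1}$ be $n\times n$ transition probability matrices of irreducible and aperiodic Markov chains on $n$ states, let $\mathbf{P_t}=(1-t)\mathbf{P_0}+t\mathbf{P_1}$ for $t\in[0,1]$, and let $\pi_t$ be the stationary distribution of $\mathbf{P_t}$. Let $\delta\in(0,1]$ and $\epsilon>0$. Then for every integer $T\ge \frac{2\,t_{mix}^2(\epsilon/2)}{\epsilon\delta}$ and every integer $k$ with $\delta\le k/T\le 1$, $$\|\pi_0\mathbf{P_{1/T}}\mathbf{P_{2/T}}\cdots\mathbf{P_{k/T}}-\pi_{k/T}\|_{TV}\le\epsilon.$$
   Context: Distributions are row vectors; $\|\mu-\nu\|_{TV}=\frac12\|\mu-\nu\|_1$. For an irreducible aperiodic transition matrix $\mathbf{P}$ with stationary distribution $\pi$, $t_{mix}(\mathbf{P},\epsilon)=\inf\{T\in\mathbb{N}: \|\nu\mathbf{P}^T-\pi\|_{TV}\le\epsilon \text{ for all distributions }\nu\}$, and $t_{mix}(\epsilon)=\sup_{s\in[0,1]}t_{mix}(\mathbf{P_s},\epsilon)$. *)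

From HB Require Import structures.
From mathcomp Require Import all_boot all_order all_algebra.
From mathcomp Require Import all_classical all_reals.
From mathcomp Require Import ereal.
Set Implicit Arguments. Unset Strict Implicit. Unset Printing Implicit Defensive.
Import Order.TTheory GRing.Theory Num.Theory.
Local Open Scope ring_scope.

Section MC.
Variables (R : realType) (n : nat).

Definition is_distr (mu : 'rV[R]_n) : Prop :=
  (forall j, 0 <= mu 0 j) /\ \sum_j mu 0 j = 1.

Definition stochastic (P : 'M[R]_n) : Prop :=
  (forall i j, 0 <= P i j) /\ (forall i, \sum_j P i j = 1).

Definition mxpow (P : 'M[R]_n) (m : nat) : 'M[R]_n := iter m (fun A => A *m P) 1%:M.

Definition irreducible (P : 'M[R]_n) : Prop :=
  forall i j, exists m : nat, 0 < mxpow P m i j.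

Definition aperiodic (P : 'M[R]_n) : Prop :=
  forall i (d : nat), (forall m : nat, (0 < m)%N -> 0 < mxpow P m i i -> (d %| m)%N) -> d = 1%N.

Definition stationary (P : 'M[R]_n) (pi : 'rV[R]_n) : Prop :=
  is_distr pi /\ pi *m P = pi.

Definition tv (mu nu : 'rV[R]_n) : R := 2^-1 * \sum_j `|mu 0 j - nu 0 j|.

Definition mixes (P : 'M[R]_n) (eps : R) (T : nat) : bool :=
  `[< forall pi nu, stationary P pi -> is_distr nu -> tv (nu *m mxpow P T) pi <= eps >].

(* t_mix(P, eps) = inf {T : mixes P eps T}  (0 if the set is empty, which
   never happens for irreducible aperiodic P) *)
Definition tmixP (P : 'M[R]_n) (eps : R) : nat :=
  match pselect (exists T, mixes P eps T) with
  | left h => ex_minn h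
  | right _ => 0%N
  end.

Definition Pint (P0 P1 : 'M[R]_n) (s : R) : 'M[R]_n := (1 - s) *: P0 + s *: P1.

Definition tmix (P0 P1 : 'M[R]_n) (eps : R) : \bar R :=
  ereal_sup [set ((tmixP (Pint P0 P1 s) eps)%:R)%:E | s in `[0, 1]%classic].

Definition evolve (P0 P1 : 'M[R]_n) (T k : nat) (mu : 'rV[R]_n) : 'rV[R]_n :=
  foldl (fun v i => v *m Pint P0 P1 (i%:R / T%:R)) mu (iota 1 k).

End MC.

From HB Require Import structures.
From mathcomp Require Import all_boot all_order all_algebra.
From mathcomp Require Import all_classical all_reals.
From mathcomp Require Import ereal.
From mathcomp Require Import ring lra zify.
Import Order.TTheory GRing.Theory Num.Theory.
Local Open Scope ring_scope.
Set Implicit Arguments. Unset Strict Implicit. Unset Printing Implicit Defensive.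

(* Put s = k/T and tau = t_mix(P_s, eps/2) <= t_mix(eps/2).  Run the
   first k - tau steps arbitrarily; during the last tau steps every matrix P_{i/T}
   differs from P_s by at most tau/T in the interpolation parameter, so the chain
   stays within l1-distance 2 tau^2/T <= eps delta of tau steps of P_s, and those
   bring any distribution within eps/2 of pi_s.  That t_mix(P_s, eps/2) is finite
   at all is Doeblin's argument: for irreducible aperiodic P the return times to a
   state form a numerical semigroup of gcd 1, hence some power of P has a
   positive column. *)

Section NumericalSemigroup.
Local Open Scope nat_scope.
Variable S : nat -> Prop.
Hypothesis S_add : forall a b, S a -> S b -> S (a + b).
Hypothesis S_gt0 : forall m, S m -> 0 < m.
Hypothesis S_gcd1 : forall d, (forall m, S m -> d %| m) -> d = 1.

Definition S0 m := m = 0 \/ S m.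

Lemma S0_add a b : S0 a -> S0 b -> S0 (a + b).
Proof.
case=> [->|Sa]; first by [].
by case=> [->|Sb]; [rewrite addn0; right | right; apply: S_add].
Qed.

Lemma S0_mull c b : S b -> S0 (c * b).
Proof.
move=> Sb; elim: c => [|c IHc]; first by left.
by rewrite mulSn; apply: S0_add => //; right.
Qed.

Lemma S_inhabited : exists a, S a.
Proof.
apply: contrapT => noS.
by have // : 2 = 1 by apply: S_gcd1 => m Sm; case: noS; exists m.
Qed.

Section Residues.
Variable a : nat.
Hypothesis Sa : S a.

Definition covered r := exists s, S0 s /\ s = r %[mod a].

(* Descent on g: a member b of S not divisible by g lets multiples of the
   smaller gcd g' = gcd(g, b) be written as multiples of g plus multiples of b. *)
Lemma covered_of_multiples g : 0 < g -> (forall m, g %| m -> covered m) ->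
  forall r, covered r.
Proof.
elim/ltn_ind: g => g IHg g_gt0 covg r.
have [g1|g_neq1] := eqVneq g 1; first by apply: covg; rewrite g1 dvd1n.
have [b [Sb ndvd_gb]] : exists b, S b /\ ~~ (g %| b).
  apply: contrapT => H; move/eqP: g_neq1; apply; apply: S_gcd1 => m Sm.
  by apply: contrapT => nd; apply: H; exists m; split => //; apply/negP.
set g' := gcdn g b.
have g'_gt0 : 0 < g' by rewrite gcdn_gt0 g_gt0.
have g'_lt : g' < g.
  rewrite ltn_neqAle (dvdn_leq g_gt0 (dvdn_gcdl g b)) andbT; apply/eqP => E.
  by move: ndvd_gb; rewrite -E dvdn_gcdr.
apply: (IHg g') => // m /dvdnP [k ->].
have [u _ /dvdnP [w Hw]] := Bezoutl b g_gt0.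
have [s1 [S0s1 Es1]] := covg (k * w * g) (dvdn_mull _ (dvdnn g)).
exists (s1 + a.-1 * (k * u) * b); split; first by apply: S0_add => //; apply: S0_mull.
rewrite -modnDml Es1 modnDml.
have -> : k * w * g + a.-1 * (k * u) * b = k * g' + (k * u * b) * a.
  have := S_gt0 Sa; rewrite -mulnA -Hw; nia.
by rewrite addnC modnMDl.
Qed.

Lemma covered_below c :
  exists B, forall r, r < c -> exists s, [/\ S0 s, s <= B & s = r %[mod a]].
Proof.
elim: c => [|c [B HB]]; first by exists 0.
have [s [S0s Es]] : covered c.
  apply: (covered_of_multiples (S_gt0 Sa)) => m /dvdnP [k ->].
  by exists 0; split; [left | rewrite modnMl mod0n].
exists (maxn B s) => r; rewrite ltnS leq_eqVlt => /orP [/eqP ->|lt_rc].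
  by exists s; split => //; rewrite leq_maxr.
have [s' [S0s' le_s'B Es']] := HB r lt_rc; exists s'; split => //.
exact: leq_trans le_s'B (leq_maxl B s).
Qed.

End Residues.

Lemma numerical_semigroup_cofinite : exists N, forall m, N <= m -> S m.
Proof.
have [a Sa] := S_inhabited; have a_gt0 := S_gt0 Sa.
have [B HB] := covered_below Sa a.
exists B.+1 => m lt_Bm.
have [s [S0s le_sB]] := HB (m %% a) (ltn_pmod m a_gt0).
rewrite modn_mod => Es.
have le_sm : s <= m by apply: leq_trans le_sB (ltnW lt_Bm).
have /dvdnP [q Hq] : a %| m - s by rewrite -(eqn_mod_dvd a le_sm) Es.
have : S0 m by rewrite -(subnKC le_sm) Hq; apply: S0_add => //; apply: S0_mull.
by case=> // m0; rewrite m0 in lt_Bm.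
Qed.

End NumericalSemigroup.

Section StochasticMatrices.
Variables (R : realType) (n : nat).
Implicit Types (P Q : 'M[R]_n) (mu nu v : 'rV[R]_n).

Lemma mxpowS P m : mxpow P m.+1 = mxpow P m *m P.
Proof. by []. Qed.

Lemma mxpowD P a b : mxpow P (a + b) = mxpow P a *m mxpow P b.
Proof.
elim: b => [|b IHb]; first by rewrite addn0 mulmx1.
by rewrite addnS !mxpowS IHb mulmxA.
Qed.

Lemma mxpowM P a b : mxpow P (a * b) = mxpow (mxpow P a) b.
Proof.
elim: b => [|b IHb]; first by rewrite muln0.
by rewrite mulnS addnC mxpowD IHb.
Qed.

Lemma stochastic_mul P Q : stochastic P -> stochastic Q -> stochastic (P *m Q).
Proof.
move=> [P_ge0 P_sum1] [Q_ge0 Q_sum1]; split.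
  by move=> i j; rewrite mxE; apply: sumr_ge0 => l _; apply: mulr_ge0.
move=> i; under eq_bigr do rewrite mxE.
rewrite exchange_big /= -(P_sum1 i); apply: eq_bigr => l _.
by rewrite -mulr_sumr Q_sum1 mulr1.
Qed.

Lemma stochastic1 : stochastic (1%:M : 'M[R]_n).
Proof.
split=> [i j|i]; first by rewrite mxE ler0n.
rewrite (bigD1 i) //= big1 ?addr0 ?mxE ?eqxx // => j /negbTE ji.
by rewrite mxE eq_sym ji.
Qed.

Lemma stochastic_mxpow P m : stochastic P -> stochastic (mxpow P m).
Proof.
move=> SP; elim: m => [|m IHm]; first exact: stochastic1.
by rewrite mxpowS; apply: stochastic_mul.
Qed.

Lemma stochastic_le1 P i j : stochastic P -> P i j <= 1.
Proof.
case=> P_ge0 P_sum1; rewrite -(P_sum1 i) (bigD1 j) //= lerDl.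
by apply: sumr_ge0 => *; apply: P_ge0.
Qed.

Lemma sum_mulmx_stochastic v P : stochastic P -> \sum_j (v *m P) 0 j = \sum_j v 0 j.
Proof.
move=> [_ P_sum1]; under eq_bigr do rewrite mxE.
rewrite exchange_big /=; apply: eq_bigr => i _.
by rewrite -mulr_sumr P_sum1 mulr1.
Qed.

Lemma distr_mulmx mu P : is_distr mu -> stochastic P -> is_distr (mu *m P).
Proof.
move=> [mu_ge0 mu_sum1] SP; split; last by rewrite sum_mulmx_stochastic.
move=> j; rewrite mxE; apply: sumr_ge0 => l _; apply: mulr_ge0 => //.
by case: SP.
Qed.

Lemma stationary_mxpow P pi m : stationary P pi -> pi *m mxpow P m = pi.
Proof.
move=> [_ piP]; elim: m => [|m IHm]; first by rewrite mulmx1.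
by rewrite mxpowS mulmxA IHm piP.
Qed.

Lemma mxpow_gt0_trans P a b i l j : stochastic P ->
  0 < mxpow P a i l -> 0 < mxpow P b l j -> 0 < mxpow P (a + b) i j.
Proof.
move=> SP pos_il pos_lj; rewrite mxpowD mxE (bigD1 l) //=.
apply: lt_le_trans (mulr_gt0 pos_il pos_lj) _; rewrite lerDl.
apply: sumr_ge0 => m _; apply: mulr_ge0.
  by case: (stochastic_mxpow a SP).
by case: (stochastic_mxpow b SP).
Qed.

Definition l1 v := \sum_j `|v 0 j|.

Lemma l1_ge0 v : 0 <= l1 v.
Proof. exact: sumr_ge0. Qed.

Lemma l1D v w : l1 (v + w) <= l1 v + l1 w.
Proof. by rewrite /l1 -big_split; apply: ler_sum => j _; rewrite mxE ler_normD. Qed.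

Lemma l1N v : l1 (- v) = l1 v.
Proof. by apply: eq_bigr => j _; rewrite mxE normrN. Qed.

Lemma l1Z c v : l1 (c *: v) = `|c| * l1 v.
Proof. by rewrite /l1 mulr_sumr; apply: eq_bigr => j _; rewrite mxE normrM. Qed.

Lemma l1_distr mu : is_distr mu -> l1 mu = 1.
Proof. by case=> mu_ge0 <-; apply: eq_bigr => j _; rewrite ger0_norm. Qed.

Lemma l1_distrB mu nu : is_distr mu -> is_distr nu -> l1 (mu - nu) <= 2.
Proof. by move=> Dmu Dnu; apply: le_trans (l1D _ _) _; rewrite l1N !l1_distr. Qed.

Lemma l1_mulmx_stochastic v P : stochastic P -> l1 (v *m P) <= l1 v.
Proof.
move=> [P_ge0 P_sum1].
apply: (@le_trans _ _ (\sum_j \sum_l `|v 0 l| * P l j)).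
  apply: ler_sum => j _; rewrite mxE; apply: le_trans (ler_norm_sum _ _ _) _.
  by apply: ler_sum => l _; rewrite normrM (ger0_norm (P_ge0 _ _)).
rewrite exchange_big /=; apply: ler_sum => l _.
by rewrite -mulr_sumr P_sum1 mulr1.
Qed.

Lemma tvE mu nu : tv mu nu = 2^-1 * l1 (mu - nu).
Proof. by rewrite /tv /l1; congr (_ * _); apply: eq_bigr => j _; rewrite !mxE. Qed.

Lemma tv_le1 mu nu : is_distr mu -> is_distr nu -> tv mu nu <= 1.
Proof. by move=> Dmu Dnu; rewrite tvE; have := l1_distrB Dmu Dnu; lra. Qed.

Lemma tv_triangle mu nu rho : tv mu rho <= 2^-1 * l1 (mu - nu) + tv nu rho.
Proof.
rewrite !tvE -mulrDr ler_pM2l ?invr_gt0 ?ltr0n //.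
have -> : mu - rho = (mu - nu) + (nu - rho) by rewrite addrA subrK.
exact: l1D.
Qed.

End StochasticMatrices.

Section Doeblin.
Variables (R : realType) (n : nat).
Implicit Types (P Q : 'M[R]_n) (mu nu v : 'rV[R]_n).

(* Column j0 of Q dominates c, so Q - c 1 e_{j0} is a nonnegative kernel of
   row mass 1 - c that acts on v exactly as Q does, because v has sum 0. *)
Lemma l1_mulmx_doeblin Q (j0 : 'I_n) c v : stochastic Q -> (forall i, c <= Q i j0) ->
  \sum_j v 0 j = 0 -> l1 (v *m Q) <= (1 - c) * l1 v.
Proof.
move=> [Q_ge0 Q_sum1] Q_ge_c v_sum0.
pose Q' i j := Q i j - c * (j == j0)%:R.
have Q'_ge0 i j : 0 <= Q' i j.
  rewrite /Q'; have [->|_] := eqVneq j j0; last by rewrite mulr0 subr0.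
  by rewrite mulr1 subr_ge0.
have vQE j : (v *m Q) 0 j = \sum_i v 0 i * Q' i j.
  rewrite mxE /Q'; under [RHS]eq_bigr do rewrite mulrBr.
  by rewrite sumrB -mulr_suml v_sum0 mul0r subr0.
apply: (@le_trans _ _ (\sum_j \sum_i `|v 0 i| * Q' i j)).
  apply: ler_sum => j _; rewrite vQE; apply: le_trans (ler_norm_sum _ _ _) _.
  by apply: ler_sum => i _; rewrite normrM (ger0_norm (Q'_ge0 _ _)).
rewrite exchange_big /= mulr_sumr; apply: ler_sum => i _.
rewrite -mulr_sumr mulrC ler_wpM2r // /Q' sumrB Q_sum1 -mulr_sumr.
by rewrite (bigD1 j0) //= eqxx big1 ?addr0 ?mulr1 // => j /negbTE ->.
Qed.

Lemma l1_mulmx_doeblin_mxpow Q (j0 : 'I_n) c v k : stochastic Q ->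
  (forall i, c <= Q i j0) -> \sum_j v 0 j = 0 ->
  l1 (v *m mxpow Q k) <= (1 - c) ^+ k * l1 v.
Proof.
move=> SQ Q_ge_c v_sum0; have c_le1 := le_trans (Q_ge_c j0) (stochastic_le1 j0 j0 SQ).
elim: k => [|k IHk]; first by rewrite mulmx1 expr0 mul1r.
rewrite mxpowS mulmxA exprS -mulrA.
apply: le_trans (l1_mulmx_doeblin SQ Q_ge_c _) _.
  by rewrite sum_mulmx_stochastic //; apply: stochastic_mxpow.
by rewrite ler_wpM2l // subr_ge0.
Qed.

Lemma expr_bernoulli (c : R) k : 0 <= c <= 1 -> (1 - c) ^+ k * (1 + k%:R * c) <= 1.
Proof.
move=> /andP [c_ge0 c_le1]; elim: k => [|k IHk]; first by rewrite mul0r addr0 mulr1.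
have x_ge0 : 0 <= (1 - c) ^+ k by rewrite exprn_ge0 // subr_ge0.
rewrite exprS -natr1; move: IHk x_ge0; set x := (1 - c) ^+ k => IHk x_ge0.
have K_ge0 : 0 <= k%:R :> R by rewrite ler0n.
have : 0 <= x * (c * (k%:R * c + c)) by rewrite !mulr_ge0 // addr_ge0 ?mulr_ge0.
nra.
Qed.

(* The number of steps is M times a k with k c e >= 1, which makes
   (1 - c)^k <= 1 / (1 + k c) smaller than e. *)
Lemma mixes_of_doeblin P e M (j0 : 'I_n) c : stochastic P -> 0 < e -> 0 < c ->
  (forall i, c <= mxpow P M i j0) -> exists T, mixes P e T.
Proof.
move=> SP e_gt0 c_gt0 PM_ge_c; have SQ := stochastic_mxpow M SP.
have c_le1 := le_trans (PM_ge_c j0) (stochastic_le1 j0 j0 SQ).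
set k := Num.Def.archi_bound (e * c)^-1.
have k_gt : (e * c)^-1 < k%:R by apply: archi_boundP; rewrite invr_ge0 mulr_ge0 ?ltW.
have kce_ge1 : 1 <= k%:R * c * e.
  move: k_gt; rewrite -(ltr_pM2l (mulr_gt0 e_gt0 c_gt0)) mulfV ?gt_eqF ?mulr_gt0 //.
  by move=> h; nra.
exists (M * k)%N; apply/asboolP => pi nu Spi Dnu.
have Dpi := Spi.1.
have <- : pi *m mxpow P (M * k) = pi by apply: stationary_mxpow.
rewrite tvE -mulmxBl mxpowM.
have sum0 : \sum_j (nu - pi) 0 j = 0.
  by under eq_bigr do rewrite !mxE; rewrite sumrB Dnu.2 Dpi.2 subrr.
have contr := l1_mulmx_doeblin_mxpow k SQ PM_ge_c sum0.
have bern := @expr_bernoulli c k (introT andP (conj (ltW c_gt0) c_le1)).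
have x_ge0 : 0 <= (1 - c) ^+ k by rewrite exprn_ge0 // subr_ge0.
have := l1_distrB Dnu Dpi; have := l1_ge0 (nu - pi).
have := l1_ge0 ((nu - pi) *m mxpow (mxpow P M) k).
nra.
Qed.

Lemma irreducible_aperiodic_positive_column P (j0 : 'I_n) :
  stochastic P -> irreducible P -> aperiodic P ->
  exists M c, 0 < c /\ forall i, c <= mxpow P M i j0.
Proof.
move=> SP IP AP.
pose S m := (0 < m)%N /\ 0 < mxpow P m j0 j0.
have [N S_large] : exists N, forall m, (N <= m)%N -> S m.
  apply: numerical_semigroup_cofinite => [a b [a_gt0 Sa] [_ Sb]|m []//|d dvd_S].
    by split; [rewrite addn_gt0 a_gt0 | apply: mxpow_gt0_trans Sa Sb].
  by apply: (AP j0) => m m_gt0 pos_m; apply: dvd_S.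
have [f Pf_gt0] : exists f : 'I_n -> nat, forall i, 0 < mxpow P (f i) i j0.
  by apply: (@fin_all_exists _ (fun=> nat) (fun i m => 0 < mxpow P m i j0)).
pose M := (N + \max_i f i)%N.
have PM_gt0 i : 0 < mxpow P M i j0.
  have le_fi : (f i <= \max_i f i)%N by apply: leq_bigmax.
  rewrite (_ : M = f i + (M - f i))%N; last by rewrite /M; lia.
  by apply: mxpow_gt0_trans SP (Pf_gt0 i) (S_large _ _).2; rewrite /M; lia.
exists M, (\prod_i mxpow P M i j0); split; first by apply: prodr_gt0.
move=> i; rewrite (bigD1 i) //= ler_piMr ?(ltW (PM_gt0 i)) //.
apply: prodr_ile1 => l _; rewrite stochastic_le1 ?ltW //.
exact: stochastic_mxpow.
Qed.

Lemma mixes_exists P e : stochastic P -> irreducible P -> aperiodic P -> 0 < e ->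
  exists T, mixes P e T.
Proof.
move=> SP IP AP e_gt0; case: (pickP (@predT 'I_n)) => [j0 _|no_state].
  have [M [c [c_gt0 PM_ge_c]]] := irreducible_aperiodic_positive_column j0 SP IP AP.
  exact: mixes_of_doeblin PM_ge_c.
exists 0%N; apply/asboolP => pi nu _ _.
by rewrite /tv big1 ?mulr0 ?ltW // => j; have := no_state j.
Qed.

Lemma mixes_tmixP P e : (exists T, mixes P e T) -> mixes P e (tmixP P e).
Proof. by move=> ex_mix; rewrite /tmixP; case: pselect => // h; case: ex_minnP. Qed.

End Doeblin.

Section Interpolation.
Variables (R : realType) (n : nat) (P0 P1 : 'M[R]_n).
Hypotheses (SP0 : stochastic P0) (SP1 : stochastic P1).
Implicit Types (mu nu : 'rV[R]_n) (s : R).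

Lemma Pint_stochastic s : 0 <= s <= 1 -> stochastic (Pint P0 P1 s).
Proof.
case: SP0 SP1 => [A_ge0 A_sum1] [B_ge0 B_sum1] /andP [s_ge0 s_le1]; split.
  by move=> i j; rewrite !mxE addr_ge0 // mulr_ge0 // subr_ge0.
move=> i; under eq_bigr do rewrite !mxE.
by rewrite big_split /= -!mulr_sumr A_sum1 B_sum1 !mulr1 subrK.
Qed.

Lemma l1_mulmx_PintB mu a b : is_distr mu ->
  l1 (mu *m Pint P0 P1 a - mu *m Pint P0 P1 b) <= 2 * `|a - b|.
Proof.
move=> Dmu.
have -> : mu *m Pint P0 P1 a - mu *m Pint P0 P1 b = (b - a) *: (mu *m P0 - mu *m P1).
  rewrite /Pint !mulmxDr -!scalemxAr; apply/matrixP => i j; rewrite !mxE; ring.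
rewrite l1Z distrC mulrC ler_wpM2r //.
by apply: l1_distrB; apply: distr_mulmx.
Qed.

Lemma Pint_mxpow_ge s m i j : 0 < s <= 1 ->
  s ^+ m * mxpow P1 m i j <= mxpow (Pint P0 P1 s) m i j.
Proof.
move=> /andP [s_gt0 s_le1]; elim: m i j => [|m IHm] i j; first by rewrite mul1r.
rewrite !mxpowS !mxE exprSr mulr_sumr; apply: ler_sum => l _.
have P1m_ge0 : 0 <= mxpow P1 m i l by case: (stochastic_mxpow m SP1).
have [P0_ge0 P1_ge0] : 0 <= P0 l j /\ 0 <= P1 l j by case: SP0; case: SP1.
rewrite -mulrA [s * _]mulrC !mulrA -mulrA; apply: ler_pM.
- by rewrite mulr_ge0 // exprn_ge0 // ltW.
- by rewrite mulr_ge0 // ltW.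
- exact: IHm.
- by rewrite mulrC !mxE lerDr mulr_ge0 // subr_ge0.
Qed.

Lemma Pint_irreducible s : 0 < s <= 1 -> irreducible P1 -> irreducible (Pint P0 P1 s).
Proof.
move=> s_range IP1 i j; have [m P1m_gt0] := IP1 i j; exists m.
apply: lt_le_trans (Pint_mxpow_ge m i j s_range).
by rewrite mulr_gt0 // exprn_gt0 //; case/andP: s_range.
Qed.

Lemma Pint_aperiodic s : 0 < s <= 1 -> aperiodic P1 -> aperiodic (Pint P0 P1 s).
Proof.
move=> s_range AP1 i d dvd_d; apply: (AP1 i) => m m_gt0 P1m_gt0; apply: dvd_d => //.
apply: lt_le_trans (Pint_mxpow_ge m i i s_range).
by rewrite mulr_gt0 // exprn_gt0 //; case/andP: s_range.
Qed.

Definition evolve_seq (T : nat) (ts : seq nat) mu :=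
  foldl (fun v i => v *m Pint P0 P1 (i%:R / T%:R)) mu ts.

Lemma evolve_seq_distr T ts mu :
  (forall i, i \in ts -> 0 <= (i%:R / T%:R : R) <= 1) -> is_distr mu ->
  is_distr (evolve_seq T ts mu).
Proof.
elim: ts mu => [|t ts IHts] mu //= ts_range Dmu.
apply: IHts => [i i_ts|]; first by apply: ts_range; rewrite in_cons i_ts orbT.
by apply: distr_mulmx => //; apply/Pint_stochastic/ts_range/mem_head.
Qed.

(* Each step with a time within b of s moves the distribution by at most 2 b
   in l1, and stochastic matrices do not expand l1 distances. *)
Lemma l1_evolve_seq_mxpowB T ts mu s b : 0 <= s <= 1 ->
  (forall i, i \in ts -> 0 <= (i%:R / T%:R : R) <= 1 /\ `|i%:R / T%:R - s| <= b) ->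
  is_distr mu ->
  l1 (evolve_seq T ts mu - mu *m mxpow (Pint P0 P1 s) (size ts)) <= (size ts)%:R * (2 * b).
Proof.
move=> s_range; elim/last_ind: ts => [|ts t IHts] ts_close Dmu.
  by rewrite mulmx1 subrr mul0r /l1 big1 // => j _; rewrite mxE normr0.
rewrite /evolve_seq foldl_rcons -/(evolve_seq T ts mu) size_rcons mxpowS mulmxA.
have ts_close' i : i \in ts -> 0 <= (i%:R / T%:R : R) <= 1 /\ `|i%:R / T%:R - s| <= b.
  by move=> i_ts; apply: ts_close; rewrite mem_rcons in_cons i_ts orbT.
have [_ t_close] : 0 <= (t%:R / T%:R : R) <= 1 /\ `|t%:R / T%:R - s| <= b.
  by apply: ts_close; rewrite mem_rcons mem_head.
set X := evolve_seq T ts mu.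
have DX : is_distr X by apply: evolve_seq_distr => // i /ts_close' [].
set Y := mu *m _.
have -> : X *m Pint P0 P1 (t%:R / T%:R) - Y *m Pint P0 P1 s
    = (X *m Pint P0 P1 (t%:R / T%:R) - X *m Pint P0 P1 s) + (X - Y) *m Pint P0 P1 s.
  by rewrite mulmxBl addrA subrK.
apply: le_trans (l1D _ _) _; rewrite -natr1 mulrDl mul1r [leRHS]addrC lerD //.
  by apply: le_trans (l1_mulmx_PintB _ _ DX) _; rewrite ler_wpM2l.
apply: le_trans (l1_mulmx_stochastic _ (Pint_stochastic s_range)) _.
exact: IHts.
Qed.

Lemma dist_iota_tail_le (T k tau i : nat) : (0 < T)%N -> (tau <= k)%N ->
  i \in iota (1 + (k - tau)) tau -> `|i%:R / T%:R - k%:R / T%:R| <= tau%:R / T%:R :> R.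
Proof.
move=> T_gt0 le_tau_k; rewrite mem_iota => /andP [le_i lt_i].
have T_gt0R : 0 < T%:R :> R by rewrite ltr0n.
rewrite -mulrBl normrM [`|_^-1|]gtr0_norm ?invr_gt0 // ler_pM2r ?invr_gt0 // ler_norml.
have [le_ik le_ki] : i%:R <= k%:R :> R /\ k%:R <= i%:R + tau%:R :> R.
  by rewrite -natrD !ler_nat; split; lia.
by apply/andP; split; lra.
Qed.

(* Split the k steps into the first k - tau and the last tau; over the last tau
   steps the chain is compared with tau steps of P_s.  If k < tau the bound on
   tau forces eps >= 2 and the claim is trivial. *)
Lemma tv_evolve_le (T k tau : nat) pi_s eps mu : (0 < T)%N -> (k <= T)%N -> 0 < eps ->
  is_distr mu -> stationary (Pint P0 P1 (k%:R / T%:R)) pi_s ->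
  mixes (Pint P0 P1 (k%:R / T%:R)) (eps / 2) tau ->
  tau%:R * tau%:R * 2 <= eps * k%:R ->
  tv (evolve P0 P1 T k mu) pi_s <= eps.
Proof.
move=> T_gt0 le_kT eps_gt0 Dmu Spi /asboolP mix tau_small.
have T_gt0R : 0 < T%:R :> R by rewrite ltr0n.
have time_range i : (i <= k)%N -> 0 <= (i%:R / T%:R : R) <= 1.
  move=> le_ik; rewrite divr_ge0 ?ler0n //= ler_pdivrMr // mul1r ler_nat.
  exact: leq_trans le_ik le_kT.
have s_range := time_range k (leqnn k); set s := k%:R / T%:R in s_range Spi mix *.
have evolve_distr ts mu' : (forall i, i \in ts -> (i <= k)%N) -> is_distr mu' ->
    is_distr (evolve_seq T ts mu').
  by move=> ts_le; apply: evolve_seq_distr => i /ts_le /time_range.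
have iota_le_k j : (j <= k)%N -> forall i, i \in iota 1 j -> (i <= k)%N.
  by move=> le_jk i; rewrite mem_iota; lia.
have [le_tau_k|lt_k_tau] := leqP tau k; last first.
  have [k0 tau0] : 0 <= k%:R :> R /\ k%:R + 1 <= tau%:R :> R.
    by rewrite ler0n natr1 ler_nat.
  apply: le_trans (tv_le1 _ Spi.1) _; last by nra.
  exact: evolve_distr _ _ (iota_le_k k (leqnn k)) Dmu.
rewrite /evolve; have -> : iota 1 k = iota 1 (k - tau) ++ iota (1 + (k - tau)) tau.
  by rewrite -iotaD subnK.
rewrite foldl_cat -!/(evolve_seq T _ _).
set nu := evolve_seq T _ mu.
have Dnu : is_distr nu by apply: evolve_distr Dmu; apply: iota_le_k; lia.
have tail_close i : i \in iota (1 + (k - tau)) tau ->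
    0 <= (i%:R / T%:R : R) <= 1 /\ `|i%:R / T%:R - s| <= tau%:R / T%:R.
  move=> i_tail; split; last exact: dist_iota_tail_le.
  by apply: time_range; move: i_tail; rewrite mem_iota; lia.
have := l1_evolve_seq_mxpowB s_range tail_close Dnu; rewrite size_iota => close.
apply: le_trans (tv_triangle _ (nu *m mxpow (Pint P0 P1 s) tau) _) _.
have := mix pi_s nu Spi Dnu.
have : tau%:R * (2 * (tau%:R / T%:R)) <= eps :> R.
  have -> : tau%:R * (2 * (tau%:R / T%:R)) = tau%:R * tau%:R * 2 / T%:R :> R by ring.
  rewrite ler_pdivrMr //; apply: le_trans tau_small _.
  by rewrite ler_wpM2l ?(ltW eps_gt0) ?ler_nat.
lra.
Qed.

End Interpolation.

Lemma tmixP_sqr_le (R : realType) (n : nat) (P0 P1 : 'M[R]_n) e x (T : nat) s :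
  (tmix P0 P1 e * tmix P0 P1 e * x%:E <= (T%:R : R)%:E)%E -> 0 < x -> 0 <= s <= 1 ->
  (tmixP (Pint P0 P1 s) e)%:R ^+ 2 * x <= T%:R.
Proof.
move=> tmix_le x_gt0 s_range.
have ub t : 0 <= t <= 1 -> (((tmixP (Pint P0 P1 t) e)%:R : R)%:E <= tmix P0 P1 e)%E.
  by move=> t_range; apply: ereal_sup_ubound; exists t.
have tmix_ge0 : (0 <= tmix P0 P1 e)%E.
  by apply: le_trans (ub 0 _); rewrite ?lee_fin ?ler0n ?lexx ?ler01.
move: tmix_le ub tmix_ge0; case: (tmix P0 P1 e) => [r| |] //; last first.
  by rewrite mulyy gt0_mulye ?lte_fin // leye_eq.
rewrite -!EFinM !lee_fin => r2x_le ub r_ge0; apply: le_trans r2x_le.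
rewrite ler_pM2r // expr2; apply: ler_pM; rewrite ?ler0n // -lee_fin; exact: ub.
Qed.

Theorem theorem2 (R : realType) (n : nat) (P0 P1 : 'M[R]_n)
  (pi : R -> 'rV[R]_n) (delta eps : R) :
  stochastic P0 -> irreducible P0 -> aperiodic P0 ->
  stochastic P1 -> irreducible P1 -> aperiodic P1 ->
  (forall t : R, 0 <= t <= 1 -> stationary (Pint P0 P1 t) (pi t)) ->
  0 < delta <= 1 -> 0 < eps ->
  forall T k : nat,
    (tmix P0 P1 (eps / 2) * tmix P0 P1 (eps / 2) * ((2 / (eps * delta))%R)%:E
       <= (T%:R : R)%:E)%E ->
    delta <= (k%:R / T%:R : R) <= 1 ->
    tv (evolve P0 P1 T k (pi 0)) (pi (k%:R / T%:R)) <= eps.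
Proof.
move=> SP0 _ _ SP1 IP1 AP1 Spi /andP [delta_gt0 _] eps_gt0 T k tmix_le.
move=> /andP [le_delta_s s_le1]; have s_gt0 := lt_le_trans delta_gt0 le_delta_s.
have T_gt0 : (0 < T)%N.
  by case: T s_gt0 {tmix_le le_delta_s s_le1} => //; rewrite invr0 mulr0 ltxx.
have T_gt0R : 0 < T%:R :> R by rewrite ltr0n.
have le_kT : (k <= T)%N by move: s_le1; rewrite ler_pdivrMr // mul1r ler_nat.
set s := k%:R / T%:R in le_delta_s s_le1 s_gt0 *.
have s_range : 0 < s <= 1 by rewrite s_gt0.
have s_range' : 0 <= s <= 1 by rewrite ltW.
set tau := tmixP (Pint P0 P1 s) (eps / 2).
apply: (tv_evolve_le SP0 SP1 (tau := tau)) => //.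
- by case: (Spi 0); rewrite ?lexx ?ler01.
- by apply: Spi.
- apply/mixes_tmixP/mixes_exists; rewrite ?divr_gt0 //.
  + exact: Pint_stochastic.
  + exact: Pint_irreducible.
  + exact: Pint_aperiodic.
- have := tmixP_sqr_le tmix_le (divr_gt0 (ltr0n _ 2) (mulr_gt0 eps_gt0 delta_gt0)) s_range'.
  rewrite -/tau expr2 mulrA ler_pdivrMr ?mulr_gt0 // => /le_trans; apply.
  by rewrite mulrCA ler_pM2l // mulrC -ler_pdivlMr.
Qed.
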